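(* Let $\mathcal{A}$ be an almost disjoint family of infinite subsets of $\mathbb{N}$ which is closed as a subset of $2^{\mathbb{N}}$, and let $\mathcal{I}(\mathcal{A})$ be the ideal generated by $\mathcal{A}$ (together with the finite sets). Then $\mathcal{I}(\mathcal{A})$ is uniformly selective.
   Context: A family of infinite subsets of $\mathbb{N}$ is almost disjoint if any two distinct members have finite intersection. $\mathcal{I}(\mathcal{A})$ consists of the sets $x\subseteq\mathbb{N}$ such that $x\setminus(a_1\cup\dots\cup a_k)$ is finite for some $a_1,\dots,a_k\in\mathcal{A}$. For $x\subseteq\mathbb{N}$, $x/n=\{m\in x:m>n\}$. An ideal $\mathcal{I}$ is uniformly selective if there is a Borel function $H:(2^{\mathbb{N}})^{\mathbb{N}}\to2^{\mathbb{N}}$ such that for every $\subseteq$-decreasing sequence $(x_n)_n$ of sets not in $\mathcal{I}$, $x=H((x_n)_n)\notin\mathcal{I}$ and $x/n\subseteq x_n$ for all $n\in x$. *)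

From Stdlib Require Import List Bool.
Import ListNotations.

(** Subsets of N as points of the Cantor space 2^N. *)
Definition cantor := nat -> bool.

Definition finite_set (x : cantor) : Prop :=
  exists N, forall m, x m = true -> m < N.
Definition infinite_set (x : cantor) : Prop := ~ finite_set x.

Definition open_cantor (U : cantor -> Prop) : Prop :=
  forall x, U x -> exists n, forall y, (forall i, i < n -> y i = x i) -> U y.
Definition closed_cantor (A : cantor -> Prop) : Prop :=
  open_cantor (fun x => ~ A x).

Definition open_seq (U : (nat -> cantor) -> Prop) : Prop :=
  forall s, U s -> exists n, forall t,
      (forall i j, i < n -> j < n -> t i j = s i j) -> U t.

(** Borel sets of a space with a given family of open sets: the
    sigma-algebra generated by the open sets (closure under extensional
    equality of predicates is included for robustness). *)
Inductive Borel {X : Type} (op : (X -> Prop) -> Prop) : (X -> Prop) -> Prop :=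
| Borel_open : forall U, op U -> Borel op U
| Borel_compl : forall A, Borel op A -> Borel op (fun x => ~ A x)
| Borel_union : forall A : nat -> X -> Prop,
    (forall n, Borel op (A n)) -> Borel op (fun x => exists n, A n x)
| Borel_ext : forall A B, Borel op A -> (forall x, A x <-> B x) -> Borel op B.

Definition Borel_function (H : (nat -> cantor) -> cantor) : Prop :=
  forall U, open_cantor U -> Borel open_seq (fun s => U (H s)).

Definition almost_disjoint (A : cantor -> Prop) : Prop :=
  (forall a, A a -> infinite_set a) /\
  (forall a b, A a -> A b -> a <> b ->
     finite_set (fun m => a m && b m)).

Definition union_list (l : list cantor) : cantor :=
  fun m => existsb (fun a => a m) l.

(** The ideal I(A): x \ (a_1 u ... u a_k) is finite for some
    a_1,...,a_k in A (k = 0 allowed, giving the finite sets). *)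
Definition ideal_gen (A : cantor -> Prop) (x : cantor) : Prop :=
  exists l : list cantor, (forall a, In a l -> A a) /\
    finite_set (fun m => x m && negb (union_list l m)).

Definition uniformly_selective (I : cantor -> Prop) : Prop :=
  exists H : (nat -> cantor) -> cantor, Borel_function H /\
    forall xs : nat -> cantor,
      (forall n m, xs (S n) m = true -> xs n m = true) ->
      (forall n, ~ I (xs n)) ->
      ~ I (H xs) /\
      (forall n, H xs n = true ->
         forall m, n < m -> H xs m = true -> xs n m = true).

(* The selector cuts, from a descending sequence [(xs n)] of sets outside
   I(A), a set [x] made of consecutive finite blocks: block [j] lies above the
   maximum [k] of the previous one, inside [xs k], is pairwise chained
   ([n < m] in the block implies [xs n m]), and is covered by no [j] members
   of A.  Taking the admissible block with least code makes every bit of [x]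
   a Borel function of [(xs n)].  Chaining gives [x/n ⊆ xs n] for [n ∈ x],
   and block [j] meets the complement of any [a_1 ∪ ... ∪ a_j] above [j], so
   [x ∉ I(A)].

   Admissible blocks exist: some infinite chain through [(xs n)] has range
   outside I(A) -- it either visits infinitely many members of A meeting every
   [xs n] in an infinite set, or is almost disjoint from all of A -- and since
   A is closed, A^j is compact, so a finite segment of that chain already
   escapes every [j]-tuple from A. *)

From Stdlib Require Import List Bool Arith Lia Classical ClassicalEpsilon Wf_nat.
From Stdlib Require Cantor FinFun.
Import ListNotations.

Definition bool_of_prop (P : Prop) : bool :=
  if excluded_middle_informative P then true else false.

Lemma bool_of_prop_true (P : Prop) : bool_of_prop P = true <-> P.
Proof.
  unfold bool_of_prop; destruct (excluded_middle_informative P); split; auto; discriminate.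
Qed.

(* The least witness of [P], and [0] when there is none; making the
   default explicit keeps [least] a Borel function of a Borel family [P]. *)
Definition least (P : nat -> Prop) : nat :=
  if excluded_middle_informative (exists n, P n)
  then epsilon (inhabits 0) (fun n => P n /\ forall m, P m -> n <= m)
  else 0.

Lemma exists_least (P : nat -> Prop) :
  (exists n, P n) -> exists n, P n /\ forall m, P m -> n <= m.
Proof.
  intros hP.
  destruct (dec_inh_nat_subset_has_unique_least_element P (fun n => classic (P n)) hP)
    as [n [hn _]].
  exists n; exact hn.
Qed.

Lemma least_spec (P : nat -> Prop) :
  (exists n, P n) -> P (least P) /\ forall m, P m -> least P <= m.
Proof.
  intros hP. unfold least.
  destruct (excluded_middle_informative _) as [_|]; [|contradiction].
  apply epsilon_spec, exists_least, hP.
Qed.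

Lemma least_eq_iff (P : nat -> Prop) v :
  least P = v <-> (P v /\ forall m, P m -> v <= m) \/ (~ (exists n, P n) /\ v = 0).
Proof.
  destruct (classic (exists n, P n)) as [hP|hP].
  - destruct (least_spec P hP) as [hl hmin]. split.
    + intros <-. left; auto.
    + intros [[hv hvmin]|[]]; [|contradiction].
      specialize (hmin v hv); specialize (hvmin _ hl); lia.
  - unfold least. destruct (excluded_middle_informative _); [contradiction|].
    split; [intros <-; right; auto|intros [[hv _]|[_ <-]]; [exfalso; eauto|reflexivity]].
Qed.

(** * Finite sets and the ideal *)

Lemma finite_set_sub (x y : cantor) :
  finite_set y -> (forall m, x m = true -> y m = true) -> finite_set x.
Proof. intros [N hN] hxy. exists N. auto. Qed.

Lemma finite_set_or (x y : cantor) :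
  finite_set x -> finite_set y -> finite_set (fun m => x m || y m).
Proof.
  intros [N1 h1] [N2 h2]. exists (N1 + N2). intros m hm.
  apply orb_true_iff in hm as [hm|hm]; [apply h1 in hm|apply h2 in hm]; lia.
Qed.

Lemma infinite_set_unbounded (x : cantor) :
  infinite_set x -> forall N, exists m, N < m /\ x m = true.
Proof.
  intros hx N. apply NNPP. intros hN. apply hx. exists (S N). intros m hm.
  destruct (Nat.lt_ge_cases N m); [exfalso; eauto|lia].
Qed.

Lemma infinite_set_of_unbounded (x : cantor) :
  (forall N, exists m, N <= m /\ x m = true) -> infinite_set x.
Proof. intros hx [N hN]. destruct (hx N) as [m [hm hxm]]. apply hN in hxm. lia. Qed.

Lemma union_list_true l m : union_list l m = true <-> exists a, In a l /\ a m = true.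
Proof. apply existsb_exists. Qed.

Lemma union_list_app l l' m : union_list (l ++ l') m = union_list l m || union_list l' m.
Proof. apply existsb_app. Qed.

Lemma finite_meet_union (x : cantor) l :
  (forall a, In a l -> finite_set (fun m => x m && a m)) ->
  finite_set (fun m => x m && union_list l m).
Proof.
  induction l as [|a l IH]; intros hl.
  - exists 0. intros m hm. rewrite andb_false_r in hm. discriminate.
  - apply (finite_set_sub _ _
      (finite_set_or _ _ (hl a (or_introl eq_refl)) (IH (fun b hb => hl b (or_intror hb))))).
    intros m. cbn. destruct (x m), (a m); auto.
Qed.

Lemma not_ideal_infinite (A : cantor -> Prop) (x : cantor) :
  ~ ideal_gen A x -> infinite_set x.
Proof.
  intros hx hfin. apply hx. exists []. split; [intros a []|].
  apply (finite_set_sub _ _ hfin). intros m. cbn. destruct (x m); auto.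
Qed.

Lemma not_ideal_of_finite_meets (A : cantor -> Prop) (x : cantor) :
  infinite_set x -> (forall a, A a -> finite_set (fun m => x m && a m)) ->
  ~ ideal_gen A x.
Proof.
  intros hinf hmeet [l [hl hout]]. apply hinf.
  apply (finite_set_sub _ _
    (finite_set_or _ _ hout (finite_meet_union x l (fun a ha => hmeet a (hl a ha))))).
  intros m hm. rewrite hm. cbn. destruct (union_list l m); auto.
Qed.

Lemma ideal_meet_finite (A : cantor -> Prop) (x b : cantor) l :
  almost_disjoint A -> (forall a, In a l -> A a) ->
  finite_set (fun m => x m && negb (union_list l m)) ->
  A b -> ~ In b l -> finite_set (fun m => x m && b m).
Proof.
  intros [_ had] hl hout hb hbl.
  assert (hbU : finite_set (fun m => b m && union_list l m)).
  { apply finite_meet_union. intros a ha.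
    apply had; auto. intros <-. contradiction. }
  apply (finite_set_sub _ _ (finite_set_or _ _ hout hbU)).
  intros m. destruct (x m), (b m), (union_list l m); auto.
Qed.

Lemma exists_code (P : nat -> Prop) N :
  (forall m, P m -> m < N) -> exists e, forall m, Nat.testbit e m = true <-> P m.
Proof.
  intros hP.
  assert (hcode : forall N, exists e, forall m, Nat.testbit e m = true <-> m < N /\ P m).
  { clear. induction N as [|N [e he]].
    - exists 0. intros m. rewrite Nat.bits_0. split; [discriminate|lia].
    - destruct (classic (P N)) as [hN|hN].
      + exists (Nat.setbit e N). intros m. rewrite Nat.setbit_iff, he. split.
        * intros [<-|[hm hPm]]; split; auto.
        * intros [hm hPm]. destruct (Nat.eq_dec N m); [left|right; split]; auto; lia.
      + exists e. intros m. rewrite he. split; [intros [hm hPm]; split; auto|].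
        intros [hm hPm]. split; auto. destruct (Nat.eq_dec N m); [subst; contradiction|lia]. }
  destruct (hcode N) as [e he]. exists e. intros m. rewrite he. split; [tauto|].
  intros hm; split; auto.
Qed.

(** * Compactness of the Cantor space *)

Definition agree_below (n : nat) (x y : cantor) : Prop := forall i, i < n -> x i = y i.

Lemma closed_cantor_and (P Q : cantor -> Prop) :
  closed_cantor P -> closed_cantor Q -> closed_cantor (fun x => P x /\ Q x).
Proof.
  intros hP hQ x hx. apply not_and_or in hx as [hx|hx];
    [destruct (hP x hx) as [n hn]|destruct (hQ x hx) as [n hn]];
    exists n; intros y hy [hPy hQy]; eapply hn; eauto.
Qed.

Lemma closed_cantor_all (P : nat -> cantor -> Prop) :
  (forall i, closed_cantor (P i)) -> closed_cantor (fun x => forall i, P i x).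
Proof.
  intros hP x hx. apply not_all_ex_not in hx as [i hi].
  destruct (hP i x hi) as [n hn]. exists n. intros y hy hall. exact (hn y hy (hall i)).
Qed.

Lemma closed_cantor_impl (c : Prop) (P : cantor -> Prop) :
  (c -> closed_cantor P) -> closed_cantor (fun x => c -> P x).
Proof.
  intros hP x hx. apply imply_to_and in hx as [hc hx].
  destruct (hP hc x hx) as [n hn]. exists n. intros y hy hcy. exact (hn y hy (hcy hc)).
Qed.

Lemma closed_cantor_finitary (P : cantor -> Prop) n :
  (forall x y, agree_below n x y -> P x -> P y) -> closed_cantor P.
Proof. intros hP x hx. exists n. intros y hy hPy. exact (hx (hP y x hy hPy)). Qed.

Lemma closed_cantor_ext (A : cantor -> Prop) (x y : cantor) :
  closed_cantor A -> (forall m, x m = y m) -> A x -> A y.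
Proof.
  intros hA hxy hx. apply NNPP. intros hy. destruct (hA y hy) as [n hn].
  apply (hn x); auto.
Qed.

Section CantorCompact.
Variable P : nat -> cantor -> Prop.
Hypothesis P_closed : forall p, closed_cantor (P p).
Hypothesis P_decreasing : forall p x, P (S p) x -> P p x.
Hypothesis P_nonempty : forall p, exists x, P p x.

Lemma P_antitone p q x : p <= q -> P q x -> P p x.
Proof. induction 1; auto. Qed.

Definition extendable (n : nat) (y : cantor) : Prop :=
  forall p, exists x, P p x /\ agree_below n x y.

Definition set_bit (y : cantor) (n : nat) (b : bool) : cantor :=
  fun i => if Nat.eqb i n then b else y i.

Lemma agree_below_set_bit n x y :
  agree_below n x y -> agree_below (S n) x (set_bit y n (x n)).
Proof.
  intros hxy i hi. unfold set_bit.
  destruct (Nat.eqb_spec i n); [subst; reflexivity|apply hxy; lia].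
Qed.

(* König's lemma for the full binary tree, read along the extendable prefixes. *)
Lemma extendable_set_bit n y :
  extendable n y -> extendable (S n) (set_bit y n true) \/ extendable (S n) (set_bit y n false).
Proof.
  intros hy.
  destruct (classic (extendable (S n) (set_bit y n true))) as [ht|ht]; [left; auto|right].
  apply not_all_ex_not in ht as [p1 hp1]. intros p.
  destruct (hy (Nat.max p p1)) as [x [hx hxy]].
  pose proof (agree_below_set_bit n x y hxy) as hagree.
  destruct (x n) eqn:hxn.
  - exfalso. apply hp1. exists x. split; auto. apply (P_antitone _ _ _ (Nat.le_max_r p p1) hx).
  - exists x. split; auto. apply (P_antitone _ _ _ (Nat.le_max_l p p1) hx).
Qed.

Fixpoint approx (n : nat) : cantor :=
  match n with
  | 0 => fun _ => false
  | S n' => set_bit (approx n') n'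
              (bool_of_prop (extendable (S n') (set_bit (approx n') n' true)))
  end.

Lemma approx_extendable n : extendable n (approx n).
Proof.
  induction n as [|n IH].
  - intros p. destruct (P_nonempty p) as [x hx]. exists x. split; auto. intros i hi; lia.
  - cbn. destruct (extendable_set_bit n (approx n) IH) as [ht|hf];
      unfold bool_of_prop; destruct (excluded_middle_informative _); tauto.
Qed.

Lemma approx_S i n : i < n -> approx (S n) i = approx n i.
Proof.
  intros hi. cbn [approx]. unfold set_bit.
  destruct (Nat.eqb_spec i n); [lia|reflexivity].
Qed.

Lemma approx_stable n i : i < n -> approx n i = approx (S i) i.
Proof.
  induction n as [|n IH]; intros hi; [lia|].
  destruct (Nat.eq_dec i n) as [->|hin]; [reflexivity|].
  rewrite approx_S by lia. apply IH. lia.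
Qed.

Lemma cantor_compact : exists x, forall p, P p x.
Proof.
  exists (fun i => approx (S i) i). intros p. apply NNPP. intros hx.
  destruct (P_closed p _ hx) as [n hn].
  destruct (approx_extendable n p) as [x [hPx hxa]].
  apply (hn x); auto. intros i hi. rewrite hxa by exact hi. apply approx_stable, hi.
Qed.
End CantorCompact.

(* A [j]-tuple of points of 2^N, interleaved into a single point. *)
Definition untangle (j : nat) (x : cantor) (i : nat) : cantor := fun m => x (m * j + i).
Definition tangle (j : nat) (G : nat -> cantor) : cantor := fun q => G (q mod j) (q / j).

Lemma untangle_tangle j G i m : i < j -> untangle j (tangle j G) i m = G i m.
Proof.
  intros hi. unfold untangle, tangle.
  rewrite <- (Nat.mod_unique (m * j + i) j m i), <- (Nat.div_unique (m * j + i) j m i);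
    auto; lia.
Qed.

Lemma closed_untangle (A : cantor -> Prop) j i :
  closed_cantor A -> i < j -> closed_cantor (fun x => A (untangle j x i)).
Proof.
  intros hA hi x hx. destruct (hA _ hx) as [n hn]. exists (n * j).
  intros y hy. apply hn. intros m hm. apply hy. nia.
Qed.

Lemma covered_by_closed (A : cantor -> Prop) j (g : nat -> nat) :
  closed_cantor A ->
  (forall p, exists G, (forall i, i < j -> A (G i)) /\
     forall q, q < p -> exists i, i < j /\ G i (g q) = true) ->
  exists G, (forall i, i < j -> A (G i)) /\ forall q, exists i, i < j /\ G i (g q) = true.
Proof.
  intros hA hcov.
  destruct (cantor_compact (fun p x => (forall i, i < j -> A (untangle j x i)) /\
              forall q, q < p -> exists i, i < j /\ untangle j x i (g q) = true))
    as [x hx].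
  - intros p. apply closed_cantor_and; apply closed_cantor_all.
    + intros i. apply closed_cantor_impl. intros hi. apply closed_untangle; auto.
    + intros q. apply closed_cantor_impl. intros hq.
      apply (closed_cantor_finitary _ (S (g q) * j)).
      intros y z hyz [i [hi hyi]]. exists i. split; auto.
      unfold untangle in *. rewrite <- hyz; auto. nia.
  - intros p y [hy1 hy2]. split; auto.
  - intros p. destruct (hcov p) as [G [hG hGp]]. exists (tangle j G). split.
    + intros i hi. apply (closed_cantor_ext A (G i)); auto.
      intros m. symmetry. apply untangle_tangle, hi.
    + intros q hq. destruct (hGp q hq) as [i [hi hGi]].
      exists i. rewrite untangle_tangle; auto.
  - exists (untangle j x). split; [apply (hx 0)|]. intros q. apply (hx (S q)). lia.
Qed.

(** * Chains through a descending sequence *)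

Definition is_chain (xs : nat -> cantor) (f : nat -> nat) : Prop :=
  forall i, f i < f (S i) /\ xs (f i) (f (S i)) = true.

Definition tail_range (f : nat -> nat) : cantor := fun m => bool_of_prop (exists i, f (S i) = m).

Lemma chain_lt xs f i i' : is_chain xs f -> i < i' -> f i < f i'.
Proof.
  intros hf; induction 1 as [|i' _ IH]; [apply hf|]. specialize (hf i'). lia.
Qed.

Lemma chain_ge xs f i : is_chain xs f -> i <= f i.
Proof. intros hf; induction i as [|i IH]; [lia|]. specialize (hf i). lia. Qed.

Lemma chain_le_iff xs f i i' : is_chain xs f -> f i <= f i' <-> i <= i'.
Proof.
  intros hf. split.
  - intros h. destruct (Nat.le_gt_cases i i') as [|hlt]; auto.
    pose proof (chain_lt xs f _ _ hf hlt). lia.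
  - intros h. destruct (Nat.eq_dec i i') as [->|hne]; [lia|].
    pose proof (chain_lt xs f i i' hf ltac:(lia)). lia.
Qed.

Lemma tail_range_infinite xs f : is_chain xs f -> infinite_set (tail_range f).
Proof.
  intros hf. apply infinite_set_of_unbounded. intros N. exists (f (S N)). split.
  - pose proof (chain_ge xs f (S N) hf). lia.
  - apply bool_of_prop_true. eauto.
Qed.

Lemma exists_chain_through (xs : nat -> cantor) (T : nat -> cantor) k :
  (forall i n, infinite_set (fun m => T i m && xs n m)) ->
  exists f, f 0 = k /\ is_chain xs f /\ forall i, T i (f (S i)) = true.
Proof.
  intros hT.
  set (next i n := epsilon (inhabits 0) (fun m => n < m /\ xs n m = true /\ T i m = true)).
  assert (hnext : forall i n, n < next i n /\ xs n (next i n) = true /\ T i (next i n) = true).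
  { intros i n. apply epsilon_spec.
    destruct (infinite_set_unbounded _ (hT i n) n) as [m [hm hTm]].
    apply andb_true_iff in hTm. exists m. tauto. }
  exists (nat_rect (fun _ => nat) k next). split; [reflexivity|]. split.
  - intros i. cbn. split; apply hnext.
  - intros i. cbn. apply hnext.
Qed.

Section DescendingSequence.
Variable xs : nat -> cantor.
Hypothesis xs_desc : forall n m, xs (S n) m = true -> xs n m = true.

Lemma desc_mono n n' m : n <= n' -> xs n' m = true -> xs n m = true.
Proof. induction 1; auto. Qed.

Lemma chain_pairwise f i i' : is_chain xs f -> i < i' -> xs (f i) (f i') = true.
Proof.
  intros hf; induction 1 as [|i' hi IH]; [apply hf|].
  apply (desc_mono (f i) (f i')); [pose proof (chain_lt xs f i i' hf hi); lia|apply hf].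
Qed.
End DescendingSequence.

Lemma exists_escaping_enumeration {T : Type} (P : T -> Prop) :
  (forall l, (forall a, In a l -> P a) -> exists b, P b /\ ~ In b l) ->
  exists bs : nat -> T, (forall v, P (bs v)) /\ forall l, exists v, ~ In (bs v) l.
Proof.
  intros hP.
  destruct (hP [] ltac:(intros a [])) as [b0 _].
  set (new l := epsilon (inhabits b0) (fun b => P b /\ ~ In b l)).
  set (prefix := nat_rect (fun _ => list T) [] (fun _ l => new l :: l)).
  assert (hprefix : forall n, (forall a, In a (prefix n) -> P a) /\
                              P (new (prefix n)) /\ ~ In (new (prefix n)) (prefix n)).
  { induction n as [|n [IHin [IHnew _]]].
    - assert (hnil : forall a, In a (prefix 0) -> P a) by (intros a []).
      split; auto. apply epsilon_spec, hP, hnil.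
    - assert (hcons : forall a, In a (prefix (S n)) -> P a) by (intros a [<-|ha]; auto).
      split; auto. apply epsilon_spec, hP, hcons. }
  set (bs v := new (prefix v)).
  assert (hin : forall u v, u < v -> In (bs u) (prefix v)).
  { intros u v; induction 1; cbn; auto. }
  assert (hinj : FinFun.Injective bs).
  { intros u v huv. destruct (Nat.lt_trichotomy u v) as [h|[h|h]]; auto; exfalso.
    - apply (hprefix v). fold (bs v). rewrite <- huv. auto.
    - apply (hprefix u). fold (bs u). rewrite huv. auto. }
  exists bs. split; [apply hprefix|]. intros l. apply NNPP. intros hl.
  assert (hincl : incl (map bs (seq 0 (S (length l)))) l).
  { intros a ha. apply in_map_iff in ha as [v [<- _]]. apply NNPP. eauto. }
  apply NoDup_incl_length in hincl;
    [rewrite length_map, length_seq in hincl; lia|].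
  apply FinFun.Injective_map_NoDup; [exact hinj|apply seq_NoDup].
Qed.

Section NonidealChain.
Variable xs : nat -> cantor.
Hypothesis xs_desc : forall n m, xs (S n) m = true -> xs n m = true.
Variable A : cantor -> Prop.
Hypothesis A_ad : almost_disjoint A.
Hypothesis xs_not_ideal : forall n, ~ ideal_gen A (xs n).

Definition persistent (b : cantor) : Prop :=
  A b /\ forall n, infinite_set (fun m => b m && xs n m).

Lemma chain_many_persistent k :
  (forall l, (forall a, In a l -> persistent a) -> exists b, persistent b /\ ~ In b l) ->
  exists f, f 0 = k /\ is_chain xs f /\ ~ ideal_gen A (tail_range f).
Proof.
  intros hmany. destruct (exists_escaping_enumeration persistent hmany) as [bs [hbs hesc]].
  (* Visit [bs v] at every step [i] coding a pair [(v, _)]. *)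
  destruct (exists_chain_through xs (fun i => bs (fst (Cantor.of_nat i))) k)
    as [f [hf0 [hf hfT]]].
  { intros i n. apply hbs. }
  exists f. split; auto. split; auto. intros [l [hl hout]].
  destruct (hesc l) as [v hv].
  refine (infinite_set_of_unbounded _ _
            (ideal_meet_finite A _ _ l A_ad hl hout (proj1 (hbs v)) hv)).
  intros N.
  set (i := Cantor.to_nat (v, N)).
  exists (f (S i)). split.
  - pose proof (Cantor.to_nat_non_decreasing v N). pose proof (chain_ge xs f (S i) hf).
    unfold i in *. lia.
  - apply andb_true_iff. split; [apply bool_of_prop_true; eauto|].
    specialize (hfT i). unfold i in hfT. rewrite Cantor.cancel_of_to in hfT. exact hfT.
Qed.

Lemma chain_few_persistent k l :
  (forall a, In a l -> A a) -> (forall b, persistent b -> In b l) ->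
  exists f, f 0 = k /\ is_chain xs f /\ ~ ideal_gen A (tail_range f).
Proof.
  intros hl hfew.
  (* Off the finitely many persistent sets, every member of [A] is almost
     disjoint from some [ys n]; a chain through [ys] is then almost disjoint
     from all of [A]. *)
  set (ys n m := xs n m && negb (union_list l m)).
  assert (ys_desc : forall n m, ys (S n) m = true -> ys n m = true).
  { unfold ys. intros n m. destruct (xs (S n) m) eqn:hx; [|discriminate].
    rewrite (xs_desc n m hx). auto. }
  assert (ys_not_ideal : forall n, ~ ideal_gen A (ys n)).
  { intros n [l' [hl' hout]]. apply (xs_not_ideal n). exists (l ++ l'). split.
    - intros a ha. apply in_app_or in ha as [ha|ha]; auto.
    - apply (finite_set_sub _ _ hout). intros m. unfold ys.
      rewrite union_list_app. destruct (xs n m), (union_list l m), (union_list l' m); auto. }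
  destruct (exists_chain_through ys (fun _ _ => true) k) as [f [hf0 [hf _]]].
  { intros i n. exact (not_ideal_infinite A _ (ys_not_ideal n)). }
  assert (hfx : is_chain xs f).
  { intros i. destruct (hf i) as [hlt hys]. apply andb_true_iff in hys. tauto. }
  exists f. split; auto. split; auto.
  apply (not_ideal_of_finite_meets A); [exact (tail_range_infinite xs f hfx)|].
  intros a ha.
  assert (hn : exists n, finite_set (fun m => a m && ys n m)).
  { destruct (classic (In a l)) as [hin|hnin].
    - exists 0, 0. intros m hm. exfalso. unfold ys in hm.
      destruct (a m) eqn:ham; [|discriminate].
      assert (hu : union_list l m = true) by (apply union_list_true; eauto).
      rewrite hu, andb_false_r in hm. discriminate.
    - assert (hnp : ~ persistent a) by (intros hp; apply hnin, hfew, hp).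
      apply not_and_or in hnp as [|hnp]; [contradiction|].
      apply not_all_ex_not in hnp as [n hn]. exists n.
      apply (finite_set_sub _ _ (NNPP _ hn)). intros m. unfold ys.
      destruct (a m), (xs n m); auto. }
  destruct hn as [n hfin].
  assert (hsmall : finite_set (fun m => m <=? f n)).
  { exists (S (f n)). intros m hm. apply Nat.leb_le in hm. lia. }
  apply (finite_set_sub _ _ (finite_set_or _ _ hsmall hfin)).
  intros m hm. apply andb_true_iff in hm as [hm ham].
  apply bool_of_prop_true in hm as [i <-].
  destruct (Nat.le_gt_cases (S i) n) as [hi|hi].
  - apply orb_true_iff. left. apply Nat.leb_le, (chain_le_iff ys f _ _ hf), hi.
  - apply orb_true_iff. right. rewrite ham.
    apply (desc_mono ys ys_desc n (f n)); [apply (chain_ge ys f n hf)|].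
    apply (chain_pairwise ys ys_desc f n (S i) hf hi).
Qed.

Lemma exists_nonideal_chain k :
  exists f, f 0 = k /\ is_chain xs f /\ ~ ideal_gen A (tail_range f).
Proof.
  destruct (classic (forall l, (forall a, In a l -> persistent a) ->
                       exists b, persistent b /\ ~ In b l)) as [hmany|hfew].
  - apply chain_many_persistent, hmany.
  - apply not_all_ex_not in hfew as [l hl]. apply imply_to_and in hl as [hl hnot].
    apply (chain_few_persistent k l).
    + intros a ha. apply (hl a ha).
    + intros b hb. apply NNPP. intros hbl. apply hnot. eauto.
Qed.
End NonidealChain.

(** * The selector *)

Definition xs_block (xs : nat -> cantor) (k : nat) (b : cantor) : Prop :=
  (exists m, b m = true) /\
  (forall m, b m = true -> k < m /\ xs k m = true) /\
  (forall n m, b n = true -> b m = true -> n < m -> xs n m = true).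

Definition uncovered (A : cantor -> Prop) (j : nat) (b : cantor) : Prop :=
  forall G, (forall i, i < j -> A (G i)) ->
    exists m, b m = true /\ forall i, i < j -> G i m = false.

(* Blocks are finite sets, coded by the natural numbers whose binary
   expansions they are. *)
Definition admissible (A : cantor -> Prop) (xs : nat -> cantor) (j k e : nat) : Prop :=
  xs_block xs k (Nat.testbit e) /\ uncovered A j (Nat.testbit e).

Definition block (A : cantor -> Prop) (xs : nat -> cantor) (j k : nat) : nat :=
  least (admissible A xs j k).

(* The [j]-th block is chosen after [stage j], the maximum of the previous one. *)
Fixpoint stage (A : cantor -> Prop) (xs : nat -> cantor) (j : nat) : nat :=
  match j with
  | 0 => 0
  | S j' => Nat.log2 (block A xs j' (stage A xs j'))
  end.

Definition select (A : cantor -> Prop) (xs : nat -> cantor) : cantor :=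
  fun m => bool_of_prop (exists j, Nat.testbit (block A xs j (stage A xs j)) m = true).

(* Compactness of [A^j]: if [j] members of [A] covered each initial segment,
   some [j] of them would cover the whole range. *)
Lemma segment_uncovered (A : cantor -> Prop) j (f : nat -> nat) :
  closed_cantor A -> ~ ideal_gen A (tail_range f) ->
  exists p, forall G, (forall i, i < j -> A (G i)) ->
    exists q, q < p /\ forall i, i < j -> G i (f (S q)) = false.
Proof.
  intros hA hni. apply NNPP. intros hnp.
  destruct (covered_by_closed A j (fun q => f (S q)) hA) as [G [hG hcov]].
  - intros p. apply NNPP. intros hnG. apply hnp. exists p. intros G hG.
    apply NNPP. intros hnq. apply hnG. exists G. split; auto.
    intros q hq. apply NNPP. intros hni'. apply hnq. exists q. split; auto.
    intros i hi. apply not_true_is_false. intros hGi. eauto.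
  - apply hni. exists (map G (seq 0 j)). split.
    + intros a ha. apply in_map_iff in ha as [i [<- hi]]. apply in_seq in hi. apply hG. lia.
    + exists 0. intros m hm. exfalso. apply andb_true_iff in hm as [hm hu].
      apply bool_of_prop_true in hm as [q <-]. destruct (hcov q) as [i [hi hGi]].
      assert (hin : union_list (map G (seq 0 j)) (f (S q)) = true).
      { apply union_list_true. exists (G i). split; auto. apply in_map, in_seq. lia. }
      rewrite hin in hu. discriminate.
Qed.

Section Selection.
Variable A : cantor -> Prop.
Hypothesis A_ad : almost_disjoint A.
Hypothesis A_closed : closed_cantor A.
Variable xs : nat -> cantor.
Hypothesis xs_desc : forall n m, xs (S n) m = true -> xs n m = true.
Hypothesis xs_not_ideal : forall n, ~ ideal_gen A (xs n).

Lemma exists_admissible j k : exists e, admissible A xs j k e.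
Proof.
  destruct (exists_nonideal_chain xs xs_desc A A_ad xs_not_ideal k) as [f [hf0 [hf hni]]].
  destruct (segment_uncovered A j f A_closed hni) as [p hp].
  destruct (exists_code (fun m => exists q, q < S p /\ f (S q) = m) (S (f (S p))))
    as [e he].
  { intros m [q [hq <-]]. apply Nat.lt_succ_r, (chain_le_iff xs f _ _ hf). lia. }
  exists e. split; [split; [|split]|].
  - exists (f 1). apply he. exists 0. split; auto. lia.
  - intros m hm. apply he in hm as [q [_ <-]]. rewrite <- hf0. split.
    + apply (chain_lt xs f _ _ hf). lia.
    + apply (chain_pairwise xs xs_desc f _ _ hf). lia.
  - intros n m hn hm hnm. apply he in hn as [q [_ <-]]. apply he in hm as [q' [_ <-]].
    apply (chain_pairwise xs xs_desc f _ _ hf).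
    destruct (Nat.le_gt_cases (S q') (S q)) as [hle|]; auto.
    apply (chain_le_iff xs f _ _ hf) in hle. lia.
  - intros G hG. destruct (hp G hG) as [q [hq hGq]]. exists (f (S q)). split; auto.
    apply he. exists q. split; auto.
Qed.

Lemma block_admissible j k : admissible A xs j k (block A xs j k).
Proof. apply (least_spec (admissible A xs j k)), exists_admissible. Qed.

Lemma block_bounds j m :
  Nat.testbit (block A xs j (stage A xs j)) m = true ->
  stage A xs j < m /\ m <= stage A xs (S j).
Proof.
  intros hm. split.
  - apply (block_admissible j (stage A xs j)), hm.
  - cbn [stage]. destruct (Nat.le_gt_cases m (Nat.log2 (block A xs j (stage A xs j)))); auto.
    rewrite Nat.bits_above_log2 in hm; [discriminate|auto].
Qed.

Lemma stage_S_in_block j : Nat.testbit (block A xs j (stage A xs j)) (stage A xs (S j)) = true.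
Proof.
  destruct (block_admissible j (stage A xs j)) as [[[m hm] _] _].
  apply Nat.bit_log2. intros he. rewrite he, Nat.bits_0 in hm. discriminate.
Qed.

Lemma stage_lt j : stage A xs j < stage A xs (S j).
Proof. apply (block_bounds j _ (stage_S_in_block j)). Qed.

Lemma stage_mono j j' : j <= j' -> stage A xs j <= stage A xs j'.
Proof. induction 1 as [|j' _ IH]; [lia|]. pose proof (stage_lt j'). lia. Qed.

Lemma stage_ge j : j <= stage A xs j.
Proof. induction j as [|j IH]; [lia|]. pose proof (stage_lt j). lia. Qed.

Lemma select_chain n m :
  select A xs n = true -> n < m -> select A xs m = true -> xs n m = true.
Proof.
  intros hn hnm hm.
  apply bool_of_prop_true in hn as [j hn]. apply bool_of_prop_true in hm as [j' hm].
  pose proof (block_bounds j n hn). pose proof (block_bounds j' m hm).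
  destruct (Nat.lt_trichotomy j j') as [hj|[<-|hj]].
  - apply (desc_mono xs xs_desc n (stage A xs j')).
    + pose proof (stage_mono (S j) j' hj). lia.
    + destruct (block_admissible j' (stage A xs j')) as [[_ [hxs _]] _]. apply hxs, hm.
  - destruct (block_admissible j (stage A xs j)) as [[_ [_ hpair]] _]. apply hpair; auto.
  - pose proof (stage_mono (S j') j hj). lia.
Qed.

Lemma select_infinite : infinite_set (select A xs).
Proof.
  apply infinite_set_of_unbounded. intros N.
  exists (stage A xs (S N)). split; [pose proof (stage_ge (S N)); lia|].
  apply bool_of_prop_true. exists N. apply stage_S_in_block.
Qed.

Lemma select_not_ideal : ~ ideal_gen A (select A xs).
Proof.
  intros [l [hl [N hN]]]. destruct l as [|a0 l0] eqn:hl0.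
  - apply select_infinite. exists N. intros m hm. apply hN. rewrite hm. reflexivity.
  - rewrite <- hl0 in hl, hN.
    (* Block number [max (length l) N] escapes the members of [l] above [N]. *)
    set (J := Nat.max (length l) N).
    destruct (proj2 (block_admissible J (stage A xs J)) (fun i => nth i l a0)) as [m [hm hout]].
    { intros i hi. apply hl. destruct (Nat.lt_ge_cases i (length l)).
      - apply nth_In; auto.
      - rewrite nth_overflow by auto. rewrite hl0. left; auto. }
    assert (hu : union_list l m = false).
    { apply not_true_is_false. intros hu. apply union_list_true in hu as [a [ha ham]].
      destruct (In_nth _ _ a0 ha) as [i [hi <-]].
      rewrite hout in ham; [discriminate|unfold J; lia]. }
    assert (hsel : select A xs m = true) by (apply bool_of_prop_true; eauto).
    assert (m < N) by (apply hN; rewrite hsel, hu; reflexivity).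
    pose proof (block_bounds J m hm). pose proof (stage_ge J). unfold J in *. lia.
Qed.
End Selection.

(** * Borel measurability *)

Notation borel := (Borel open_seq).

Lemma borel_const (P : Prop) : borel (fun _ => P).
Proof.
  destruct (classic P) as [hP|hP].
  - apply Borel_open. intros s _. exists 0. auto.
  - apply (Borel_ext _ (fun _ => False)); [|tauto]. apply Borel_open. intros s [].
Qed.

Lemma borel_forall (S : nat -> (nat -> cantor) -> Prop) :
  (forall n, borel (S n)) -> borel (fun s => forall n, S n s).
Proof.
  intros hS. apply (Borel_ext _ (fun s => ~ exists n, ~ S n s)).
  - apply Borel_compl, Borel_union. intros n. apply Borel_compl, hS.
  - intros s. split; [intros h n; apply NNPP; eauto|intros h [n hn]; auto].
Qed.

Lemma borel_and (S T : (nat -> cantor) -> Prop) :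
  borel S -> borel T -> borel (fun s => S s /\ T s).
Proof.
  intros hS hT. apply (Borel_ext _ (fun s => forall n, match n with 0 => S s | _ => T s end)).
  - apply borel_forall. intros [|n]; auto.
  - intros s. split; [intros h; exact (conj (h 0) (h 1))|intros [] [|n]; auto].
Qed.

Lemma borel_or (S T : (nat -> cantor) -> Prop) :
  borel S -> borel T -> borel (fun s => S s \/ T s).
Proof.
  intros hS hT. apply (Borel_ext _ (fun s => exists n, match n with 0 => S s | _ => T s end)).
  - apply Borel_union. intros [|n]; auto.
  - intros s. split; [intros [[|n] h]; auto|intros [h|h]; [exists 0|exists 1]; auto].
Qed.

Lemma borel_impl (P : Prop) (S : (nat -> cantor) -> Prop) :
  borel S -> borel (fun s => P -> S s).
Proof.
  intros hS. destruct (classic P) as [hP|hP].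
  - apply (Borel_ext _ S); [auto|intros s; tauto].
  - apply (Borel_ext _ (fun _ => True)); [apply borel_const|intros s; tauto].
Qed.

Lemma borel_iff (P : Prop) (S : (nat -> cantor) -> Prop) :
  borel S -> borel (fun s => S s <-> P).
Proof.
  intros hS. destruct (classic P) as [hP|hP].
  - apply (Borel_ext _ S); [auto|intros s; tauto].
  - apply (Borel_ext _ (fun s => ~ S s)); [apply Borel_compl, hS|intros s; tauto].
Qed.

Lemma borel_bit i m : borel (fun s => s i m = true).
Proof.
  apply Borel_open. intros s hs. exists (S (Nat.max i m)). intros t ht.
  rewrite ht; auto; lia.
Qed.

Lemma borel_least (P : (nat -> cantor) -> nat -> Prop) :
  (forall n, borel (fun s => P s n)) -> forall v, borel (fun s => least (P s) = v).
Proof.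
  intros hP v. apply (Borel_ext _ _ _ (borel_or _ _
    (borel_and _ _ (hP v) (borel_forall _ (fun m => borel_impl (m < v) _ (Borel_compl _ _ (hP m)))))
    (borel_and _ _ (Borel_compl _ _ (Borel_union _ _ hP)) (borel_const (v = 0))))).
  intros s. rewrite least_eq_iff. split; (intros [[hv hmin]|h]; [left; split|right]); auto.
  - intros m hPm. destruct (Nat.le_gt_cases v m); auto. exfalso; eapply hmin; eauto.
  - intros m hm hPm. specialize (hmin m hPm). lia.
Qed.

Lemma borel_subst (f : (nat -> cantor) -> nat) (Q : (nat -> cantor) -> nat -> Prop) :
  (forall v, borel (fun s => f s = v)) -> (forall v, borel (fun s => Q s v)) ->
  borel (fun s => Q s (f s)).
Proof.
  intros hf hQ. apply (Borel_ext _ (fun s => exists v, f s = v /\ Q s v)).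
  - apply Borel_union. intros v. apply borel_and; auto.
  - intros s. split; [intros [v [<- h]]; auto|eauto].
Qed.

(* An open set is the union of the basic neighbourhoods it contains, each
   given by a length [n] and a pattern coded by [e]. *)
Lemma open_cantor_as_union (U : cantor -> Prop) (y : cantor) :
  open_cantor U ->
  U y <-> exists n e, (forall i, i < n -> (y i = true <-> Nat.testbit e i = true)) /\
            forall z, (forall i, i < n -> (z i = true <-> Nat.testbit e i = true)) -> U z.
Proof.
  intros hU. split.
  - intros hy. destruct (hU y hy) as [n hn].
    destruct (exists_code (fun i => i < n /\ y i = true) n) as [e he]; [tauto|].
    exists n, e. split.
    + intros i hi. rewrite he. tauto.
    + intros z hz. apply hn. intros i hi. apply eq_true_iff_eq.
      rewrite hz, he by exact hi. tauto.
  - intros [n [e [hy hcyl]]]. apply hcyl, hy.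
Qed.

Lemma borel_function_of_bits (H : (nat -> cantor) -> cantor) :
  (forall m, borel (fun s => H s m = true)) -> Borel_function H.
Proof.
  intros hH U hU.
  apply (Borel_ext _ _ _ (Borel_union _ _ (fun n => Borel_union _ _ (fun e =>
    borel_and _ _ (borel_forall _ (fun i => borel_impl (i < n) _
                     (borel_iff (Nat.testbit e i = true) _ (hH i))))
                  (borel_const (forall z, (forall i, i < n ->
                     (z i = true <-> Nat.testbit e i = true)) -> U z)))))).
  intros s. symmetry. apply open_cantor_as_union, hU.
Qed.

Lemma borel_admissible A j k e : borel (fun s => admissible A s j k e).
Proof.
  apply borel_and; [|apply borel_const]. unfold xs_block.
  apply borel_and; [apply borel_const|]. apply borel_and.
  - apply borel_forall. intros m. apply borel_impl, borel_and; [apply borel_const|apply borel_bit].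
  - apply borel_forall. intros n. apply borel_forall. intros m.
    apply borel_impl, borel_impl, borel_impl, borel_bit.
Qed.

Lemma borel_block A j k e : borel (fun s => block A s j k = e).
Proof. apply borel_least. intros e'. apply borel_admissible. Qed.

Lemma borel_stage A j v : borel (fun s => stage A s j = v).
Proof.
  revert v. induction j as [|j IH]; intros v; [apply (borel_const (0 = v))|].
  apply (borel_subst (fun s => stage A s j) (fun s k => Nat.log2 (block A s j k) = v) IH).
  intros k. apply (borel_subst (fun s => block A s j k) (fun _ e => Nat.log2 e = v)).
  - apply borel_block.
  - intros e. apply borel_const.
Qed.

Lemma select_borel A : Borel_function (select A).
Proof.
  apply borel_function_of_bits. intros m.
  apply (Borel_ext _ (fun s => exists j, Nat.testbit (block A s j (stage A s j)) m = true)).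
  - apply Borel_union. intros j.
    apply (borel_subst (fun s => stage A s j) (fun s k => Nat.testbit (block A s j k) m = true)).
    + apply borel_stage.
    + intros k. apply (borel_subst (fun s => block A s j k) (fun _ e => Nat.testbit e m = true)).
      * apply borel_block.
      * intros e. apply borel_const.
  - intros s. unfold select. rewrite bool_of_prop_true. reflexivity.
Qed.

Theorem mainTheorem11 (A : cantor -> Prop) :
  almost_disjoint A -> closed_cantor A ->
  uniformly_selective (ideal_gen A).
Proof.
  intros A_ad A_closed. exists (select A). split; [apply select_borel|].
  intros xs xs_desc xs_not_ideal. split.
  - apply select_not_ideal; auto.
  - intros n hn m hnm hm. apply (select_chain A A_ad A_closed xs xs_desc xs_not_ideal); auto.
Qed.
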